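(* Let $k\ge1$ and let $A_k$ be the matrix defined below. The Graver basis $\mathcal{G}(A_k)$ is the disjoint union of the set $$\pm\left\{(-\mathbf{v}_1,\,-\mathbf{1}_k+\mathbf{v}_1,\,\mathbf{v}_2,\,\mathbf{1}_k-\mathbf{v}_2,\,-1,\,1)^{\mathsf T}:\mathbf{v}_1,\mathbf{v}_2\in\{0,1\}^k\right\}$$ and the sets $$\pm\left\{(\mathbf{e}_i,-\mathbf{e}_i,\mathbf{0}_k,\mathbf{0}_k,0,0)^{\mathsf T}:i\in[k]\right\},\qquad \pm\left\{(\mathbf{0}_k,\mathbf{0}_k,\mathbf{e}_i,-\mathbf{e}_i,0,0)^{\mathsf T}:i\in[k]\right\},$$ where $\mathbf{e}_1,\dots,\mathbf{e}_k$ are the standard unit vectors of $\mathbb{Z}^k$ and $\pm S:=S\cup(-S)$.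
   Context: $I_k$ is the $k\times k$ identity, $\mathbf{1}_k$ the all-ones vector and $\mathbf{0}_k$ the zero vector in $\mathbb{Z}^k$. Define $$A_k=\begin{pmatrix} I_k & I_k & 0 & 0 & -\mathbf{1}_k & \mathbf{0}\\ 0&0&I_k&I_k&\mathbf{0}&-\mathbf{1}_k\\ 0&0&0&0&1&1\end{pmatrix}\in\mathbb{Z}^{(2k+1)\times(4k+2)}$$ (zero blocks of appropriate sizes; last two columns are single columns). For vectors $\mathbf{u},\mathbf{v}\in\mathbb{Z}^n$, $\mathbf{u}\sqsubseteq\mathbf{v}$ iff $u_iv_i\ge0$ and $|u_i|\le|v_i|$ for all $i$. The Graver basis $\mathcal{G}(A)$ of $A\in\mathbb{Z}^{d\times n}$ is the set of $\sqsubseteq$-minimal elements of $(\ker(A)\cap\mathbb{Z}^n)\setminus\{\mathbf{0}\}$. *)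

From HB Require Import structures.
From mathcomp Require Import all_boot all_order all_algebra.
Set Implicit Arguments. Unset Strict Implicit. Unset Printing Implicit Defensive.
Import Order.TTheory GRing.Theory Num.Theory.
Local Open Scope ring_scope.

Notation ncols k := ((((k + k) + k) + k) + 1 + 1)%N.
Notation nrows k := ((k + k) + 1)%N.

Definition A_mat (k : nat) : 'M[int]_(nrows k, ncols k) :=
  col_mx
    (col_mx
       (row_mx (row_mx (row_mx (row_mx (row_mx 1%:M 1%:M) 0) 0)
                 (- const_mx 1)) 0)
       (row_mx (row_mx (row_mx (row_mx (row_mx 0 0) 1%:M) 1%:M) 0)
                 (- const_mx 1)))
    (row_mx (row_mx (row_mx (row_mx (row_mx 0 0) 0) 0) 1) 1).

Definition blkvec (k : nat) (a b c d : 'cV[int]_k) (s t : int) : 'cV[int]_(ncols k) :=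
  col_mx (col_mx (col_mx (col_mx (col_mx a b) c) d) s%:M) t%:M.

Definition conf_le (n : nat) (u v : 'cV[int]_n) : Prop :=
  forall i, 0 <= u i 0 * v i 0 /\ `|u i 0| <= `|v i 0|.

Definition in_ker (d n : nat) (A : 'M[int]_(d, n)) (x : 'cV[int]_n) : Prop :=
  A *m x = 0.

Definition graver (d n : nat) (A : 'M[int]_(d, n)) (x : 'cV[int]_n) : Prop :=
  [/\ in_ker A x, x <> 0 &
      forall y, in_ker A y -> y <> 0 -> conf_le y x -> y = x].

Definition pm (n : nat) (S : 'cV[int]_n -> Prop) (x : 'cV[int]_n) : Prop :=
  S x \/ S (- x).

Definition is01 (k : nat) (v : 'cV[int]_k) : Prop :=
  forall i, v i 0 = 0 \/ v i 0 = 1.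

Definition ones (k : nat) : 'cV[int]_k := const_mx 1.
Definition evec (k : nat) (i : 'I_k) : 'cV[int]_k := delta_mx i 0.

Definition S1 (k : nat) (x : 'cV[int]_(ncols k)) : Prop :=
  exists v1 v2 : 'cV[int]_k, [/\ is01 v1, is01 v2 &
    x = blkvec (- v1) (- ones k + v1) v2 (ones k - v2) (-1) 1].

Definition S2 (k : nat) (x : 'cV[int]_(ncols k)) : Prop :=
  exists i : 'I_k, x = blkvec (evec i) (- evec i) 0 0 0 0.

Definition S3 (k : nat) (x : 'cV[int]_(ncols k)) : Prop :=
  exists i : 'I_k, x = blkvec 0 0 (evec i) (- evec i) 0 0.

From HB Require Import structures.
From mathcomp Require Import all_boot all_order all_algebra.
From mathcomp Require Import zify.
Import Order.TTheory GRing.Theory Num.Theory.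
Set Implicit Arguments.
Unset Strict Implicit.
Unset Printing Implicit Defensive.

Local Open Scope ring_scope.

(* A kernel vector (a, b, c, d, s, t) satisfies a + b = s 1, c + d = t 1 and
   s + t = 0.  If s <> 0, then up to sign s < 0, and rounding each coordinate
   of (a, c) to its sign pattern gives an element of S1 conformally below it.
   If s = t = 0, then a = -b and c = -d, and any nonzero coordinate a_i or c_i
   gives a vector of S2 or S3 below it.  Conversely each vector of S1, S2, S3
   is primitive: a conformal kernel vector below it is forced, coordinate by
   coordinate, to be a 0/1 multiple of it. *)

Section Graver.

Variables (d n : nat) (A : 'M[int]_(d, n)).

Lemma conf_leN (x y : 'cV[int]_n) : conf_le (- y) (- x) <-> conf_le y x.
Proof. by split=> H i; move: (H i); rewrite !mxE ?mulrNN ?normrN. Qed.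

Lemma in_kerN (x : 'cV[int]_n) : in_ker A x -> in_ker A (- x).
Proof. by rewrite /in_ker mulmxN => ->; rewrite oppr0. Qed.

Lemma graver_primitive (x : 'cV[int]_n) :
  in_ker A x -> x <> 0 ->
  (forall y, in_ker A y -> conf_le y x -> y = 0 \/ y = x) -> graver A x.
Proof. by move=> Kx Nx Px; split=> // y Ky Ny /(Px y Ky) []. Qed.

Lemma graverN (x : 'cV[int]_n) : graver A x -> graver A (- x).
Proof.
case=> Kx Nx Mx; split; first exact: in_kerN.
  by move/eqP; rewrite oppr_eq0 => /eqP.
move=> y Ky Ny Cy; apply: oppr_inj; rewrite opprK.
apply: Mx; [exact: in_kerN | by move/eqP; rewrite oppr_eq0 => /eqP |].
by apply/conf_leN; rewrite opprK.
Qed.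

Lemma graver_pm (S : 'cV[int]_n -> Prop) (x : 'cV[int]_n) :
  (forall y, S y -> graver A y) -> pm S x -> graver A x.
Proof. by move=> SG [/SG // | /SG/graverN]; rewrite opprK. Qed.

Lemma graver_testP (T : 'cV[int]_n -> Prop) :
  (forall x, T x -> graver A x) ->
  (forall x, in_ker A x -> x <> 0 -> exists2 y, T y & conf_le y x) ->
  forall x, graver A x <-> T x.
Proof.
move=> TG Tbelow x; split=> [[Kx Nx Mx] | /TG //].
have [y Ty Cy] := Tbelow x Kx Nx.
by have [Ky Ny _] := TG y Ty; rewrite -(Mx y Ky Ny Cy).
Qed.

End Graver.

Lemma scalar_mx1_inj (s t : int) : (s%:M : 'M[int]_1) = t%:M -> s = t.
Proof. by move/matrixP/(_ ord0 ord0); rewrite !mxE. Qed.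

Lemma cV0P m (v : 'cV[int]_m) : v = 0 <-> forall i, v i 0 = 0.
Proof.
split=> [-> i | H]; first by rewrite mxE.
by apply/matrixP => i j; rewrite (ord1 j) H mxE.
Qed.

Section Blocks.

Variable k : nat.
Implicit Types (a b c d : 'cV[int]_k) (s t : int) (x y : 'cV[int]_(ncols k)).

Lemma blkvec_inj a b c d s t a' b' c' d' s' t' :
  blkvec a b c d s t = blkvec a' b' c' d' s' t' ->
  [/\ a = a', b = b', c = c', d = d' & s = s' /\ t = t'].
Proof.
rewrite /blkvec => /eq_col_mx [/eq_col_mx [/eq_col_mx [/eq_col_mx
  [/eq_col_mx [-> ->] ->] ->] /scalar_mx1_inj ->] /scalar_mx1_inj ->].
by [].
Qed.

Lemma blkvecN a b c d s t :
  - blkvec a b c d s t = blkvec (- a) (- b) (- c) (- d) (- s) (- t).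
Proof. by rewrite /blkvec !opp_col_mx !raddfN. Qed.

Lemma blkvecZ (r : int) a b c d s t :
  r *: blkvec a b c d s t = blkvec (r *: a) (r *: b) (r *: c) (r *: d) (r * s) (r * t).
Proof. by rewrite /blkvec !scale_col_mx !scale_scalar_mx. Qed.

Lemma blkvec0 : blkvec 0 0 0 0 0 0 = 0 :> 'cV[int]_(ncols k).
Proof. by rewrite /blkvec !raddf0 !col_mx0. Qed.

Lemma blkvecP x : exists a b c d s t, x = blkvec a b c d s t.
Proof.
set u := usubmx x.
exists (usubmx (usubmx (usubmx (usubmx u)))),
  (dsubmx (usubmx (usubmx (usubmx u)))), (dsubmx (usubmx (usubmx u))),
  (dsubmx (usubmx u)), (dsubmx u 0 0), (dsubmx x 0 0).
by rewrite /blkvec -!mx11_scalar !vsubmxK.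
Qed.

Lemma conf_le_col_mx m p (u1 v1 : 'cV[int]_m) (u2 v2 : 'cV[int]_p) :
  conf_le (col_mx u1 u2) (col_mx v1 v2) <-> conf_le u1 v1 /\ conf_le u2 v2.
Proof.
split=> [H | [H1 H2] i].
  by split=> i; [move: (H (lshift _ i)) | move: (H (rshift _ i))];
    rewrite ?col_mxEu ?col_mxEd.
by rewrite -(splitK i); case: (split i) => j /=; rewrite ?col_mxEu ?col_mxEd.
Qed.

Lemma conf_le_scalar_mx s t :
  conf_le (s%:M : 'cV_1) t%:M <-> 0 <= s * t /\ `|s| <= `|t|.
Proof. by split=> [/(_ ord0) | H i]; rewrite ?(ord1 i) !mxE eqxx !mulr1n. Qed.

Lemma conf_le_blkvec a b c d s t a' b' c' d' s' t' :
  conf_le (blkvec a b c d s t) (blkvec a' b' c' d' s' t') <->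
  [/\ conf_le a a', conf_le b b', conf_le c c', conf_le d d' &
     (0 <= s * s' /\ `|s| <= `|s'|) /\ (0 <= t * t' /\ `|t| <= `|t'|)].
Proof.
rewrite /blkvec !conf_le_col_mx !conf_le_scalar_mx.
by split=> [[[[[[? ?] ?] ?] ?] ?] | [? ? ? ? [? ?]]].
Qed.

Lemma in_ker_blkvec a b c d s t :
  in_ker (A_mat k) (blkvec a b c d s t) <->
  [/\ forall i, a i 0 + b i 0 = s, forall i, c i 0 + d i 0 = t & s + t = 0].
Proof.
rewrite /in_ker /A_mat /blkvec !mul_col_mx !mul_row_col.
rewrite !mul1mx !mul0mx ?addr0 ?add0r !mulNmx !mul_mx_scalar.
split=> [/eqP | [Hab Hcd Hst]].
  rewrite !col_mx_eq0 => /andP[/andP[/eqP/cV0P Hab /eqP/cV0P Hcd] /eqP Hst].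
  split=> [i | i |]; last by apply: scalar_mx1_inj; rewrite raddfD Hst raddf0.
    by move: (Hab i); rewrite !mxE mulr1 => /eqP; rewrite subr_eq0 => /eqP.
  by move: (Hcd i); rewrite !mxE mulr1 => /eqP; rewrite subr_eq0 => /eqP.
apply/eqP; rewrite !col_mx_eq0 -raddfD Hst raddf0 eqxx andbT.
by apply/andP; split; apply/eqP/cV0P=> i; rewrite !mxE mulr1 ?Hab ?Hcd subrr.
Qed.

End Blocks.

Lemma conf_le0 m (y : 'cV[int]_m) : conf_le y 0 -> y = 0.
Proof. by move=> C; apply/cV0P=> i; move: (C i); rewrite mxE; lia. Qed.

Lemma conf_le_evec_opp k (i : 'I_k) (a b : 'cV[int]_k) :
  conf_le a (evec i) -> (forall j, a j 0 + b j 0 = 0) ->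
  exists2 r : int, r = 0 \/ r = 1 & a = r *: evec i /\ b = r *: - evec i.
Proof.
move=> Ca Hab; exists (a i 0); last split.
- by move: (Ca i); rewrite !mxE !eqxx; lia.
- apply/matrixP=> j l; rewrite (ord1 l) !mxE; move: (Ca j); rewrite !mxE.
  by case: (eqVneq j i) => [-> | _] /=; lia.
- apply/matrixP=> j l; rewrite (ord1 l) !mxE; move: (Ca j) (Hab j); rewrite !mxE.
  by case: (eqVneq j i) => [-> | _] /=; lia.
Qed.

Section GraverElements.

Variable k : nat.

Lemma S1_graver (x : 'cV[int]_(ncols k)) : S1 x -> graver (A_mat k) x.
Proof.
case=> v1 [v2 [h1 h2 ->]]; apply: graver_primitive.
- apply/in_ker_blkvec; rewrite /ones.
  by split=> [i | i |]; rewrite ?mxE // addrCA ?addNr ?subrr addr0.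
- by rewrite -blkvec0 => /blkvec_inj [_ _ _ _ []].
move=> y; have [a [b [c [d [s [t ->]]]]]] := blkvecP y.
case/in_ker_blkvec=> Hab Hcd Hst /conf_le_blkvec [Ca Cb Cc Cd [[? ?] [? ?]]].
have s01 : s = 0 \/ s = -1 by lia.
suff -> : blkvec a b c d s t =
          (- s) *: blkvec (- v1) (- ones k + v1) v2 (ones k - v2) (-1) 1.
  by case: s01 => ->; rewrite ?oppr0 ?opprK ?scale0r ?scale1r; auto.
rewrite blkvecZ; congr blkvec; try lia;
  apply/matrixP=> i j; rewrite (ord1 j) !mxE;
  move: (Ca i) (Cb i) (Cc i) (Cd i) (Hab i) (Hcd i); rewrite !mxE;
  by case: (h1 i) => ->; case: (h2 i) => ->; lia.
Qed.

Lemma S2_graver (x : 'cV[int]_(ncols k)) : S2 x -> graver (A_mat k) x.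
Proof.
case=> i ->; apply: graver_primitive.
- by apply/in_ker_blkvec; split=> [j | j |]; rewrite ?mxE ?addr0 ?addrN.
- by rewrite -blkvec0 => /blkvec_inj [/matrixP/(_ i 0)]; rewrite !mxE !eqxx.
move=> y; have [a [b [c [d [s [t ->]]]]]] := blkvecP y.
case/in_ker_blkvec=> Hab _ _.
case/conf_le_blkvec=> [Ca Cb /conf_le0 -> /conf_le0 -> [[? ?] [? ?]]].
have [s0 t0] : s = 0 /\ t = 0 by lia.
subst s t; have [r r01 [-> ->]] := conf_le_evec_opp Ca Hab.
suff -> : blkvec (r *: evec i) (r *: - evec i) 0 0 0 0 =
          r *: blkvec (evec i) (- evec i) 0 0 0 0.
  by case: r01 => ->; rewrite ?scale0r ?scale1r; auto.
by rewrite blkvecZ !scaler0 mulr0.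
Qed.

Lemma S3_graver (x : 'cV[int]_(ncols k)) : S3 x -> graver (A_mat k) x.
Proof.
case=> i ->; apply: graver_primitive.
- by apply/in_ker_blkvec; split=> [j | j |]; rewrite ?mxE ?addr0 ?addrN.
- by rewrite -blkvec0 => /blkvec_inj [_ _ /matrixP/(_ i 0)]; rewrite !mxE !eqxx.
move=> y; have [a [b [c [d [s [t ->]]]]]] := blkvecP y.
case/in_ker_blkvec=> _ Hcd _.
case/conf_le_blkvec=> [/conf_le0 -> /conf_le0 -> Cc Cd [[? ?] [? ?]]].
have [s0 t0] : s = 0 /\ t = 0 by lia.
subst s t; have [r r01 [-> ->]] := conf_le_evec_opp Cc Hcd.
suff -> : blkvec 0 0 (r *: evec i) (r *: - evec i) 0 0 =
          r *: blkvec 0 0 (evec i) (- evec i) 0 0.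
  by case: r01 => ->; rewrite ?scale0r ?scale1r; auto.
by rewrite blkvecZ !scaler0 mulr0.
Qed.

End GraverElements.

Lemma pm_conf_le_below n (S P : 'cV[int]_n -> Prop) (x : 'cV[int]_n) :
  (forall y, pm S y -> P y) ->
  (exists2 y, S y & conf_le y x) \/ (exists2 y, S y & conf_le y (- x)) ->
  exists2 y, P y & conf_le y x.
Proof.
move=> SP [[y Sy Cy] | [y Sy Cy]]; first by exists y => //; apply: SP; left.
exists (- y); first by apply: SP; right; rewrite opprK.
by apply/conf_leN; rewrite opprK.
Qed.

Section ConformalBelow.

Variable k : nat.
Implicit Types (a b c d : 'cV[int]_k) (s t : int).

Lemma S1_conf_le_below a b c d s t :
  (forall i, a i 0 + b i 0 = s) -> (forall i, c i 0 + d i 0 = t) -> s + t = 0 ->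
  s < 0 -> exists2 y, S1 y & conf_le y (blkvec a b c d s t).
Proof.
move=> Hab Hcd Hst Hs.
pose v1 : 'cV[int]_k := \col_i (if a i 0 < 0 then 1 else 0).
pose v2 : 'cV[int]_k := \col_i (if 0 < c i 0 then 1 else 0).
exists (blkvec (- v1) (- ones k + v1) v2 (ones k - v2) (-1) 1).
  by exists v1, v2; split=> // i; rewrite !mxE; case: ifP; auto.
apply/conf_le_blkvec; rewrite /ones; split; last by split; lia.
all: move=> i; move: (Hab i) (Hcd i); rewrite !mxE.
all: by case: ifPn; rewrite -?leNgt; lia.
Qed.

Lemma S2_conf_le_below a b c d s t i :
  0 < a i 0 -> a i 0 + b i 0 = 0 ->
  exists2 y, S2 y & conf_le y (blkvec a b c d s t).
Proof.
move=> Ha Hab; exists (blkvec (evec i) (- evec i) 0 0 0 0); first by exists i.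
apply/conf_le_blkvec; split; last by split; lia.
all: move=> j; rewrite !mxE ?eqxx ?andbT.
all: by case: (eqVneq j i) => [-> | _] /=; lia.
Qed.

Lemma S3_conf_le_below a b c d s t i :
  0 < c i 0 -> c i 0 + d i 0 = 0 ->
  exists2 y, S3 y & conf_le y (blkvec a b c d s t).
Proof.
move=> Hc Hcd; exists (blkvec 0 0 (evec i) (- evec i) 0 0); first by exists i.
apply/conf_le_blkvec; split; last by split; lia.
all: move=> j; rewrite !mxE ?eqxx ?andbT.
all: by case: (eqVneq j i) => [-> | _] /=; lia.
Qed.

End ConformalBelow.

Lemma graver_candidate_conf_le_below k (x : 'cV[int]_(ncols k)) :
  in_ker (A_mat k) x -> x <> 0 ->
  exists2 y, [\/ pm (@S1 k) y, pm (@S2 k) y | pm (@S3 k) y] & conf_le y x.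
Proof.
have [a [b [c [d [s [t ->]]]]]] := blkvecP x => Kx Nx.
have /in_ker_blkvec [Hab Hcd Hst] := Kx.
have /in_ker_blkvec [Hab' Hcd' Hst'] :
    in_ker (A_mat k) (blkvec (- a) (- b) (- c) (- d) (- s) (- t)).
  by rewrite -blkvecN; apply: in_kerN.
have [sneg | spos | s0] := ltgtP s 0.
- apply: (@pm_conf_le_below _ (@S1 k)) => [y ? | ]; first exact: Or31.
  by left; apply: S1_conf_le_below.
- apply: (@pm_conf_le_below _ (@S1 k)) => [y ? | ]; first exact: Or31.
  by right; rewrite blkvecN; apply: S1_conf_le_below; rewrite // oppr_lt0.
have t0 : t = 0 by lia.
subst s t.
case: (pickP (fun i => a i 0 != 0)) => [i /= /eqP ai | a0].
  apply: (@pm_conf_le_below _ (@S2 k)) => [y ? | ]; first exact: Or32.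
  have [apos | aneg] : 0 < a i 0 \/ a i 0 < 0 by lia.
    by left; apply: (S2_conf_le_below _ _ _ _ apos); rewrite Hab.
  have aneg' : 0 < (- a) i 0 by rewrite mxE oppr_gt0.
  by right; rewrite blkvecN; apply: (S2_conf_le_below _ _ _ _ aneg'); rewrite Hab' oppr0.
case: (pickP (fun i => c i 0 != 0)) => [i /= /eqP ci | c0].
  apply: (@pm_conf_le_below _ (@S3 k)) => [y ? | ]; first exact: Or33.
  have [cpos | cneg] : 0 < c i 0 \/ c i 0 < 0 by lia.
    by left; apply: (S3_conf_le_below _ _ _ _ cpos); rewrite Hcd.
  have cneg' : 0 < (- c) i 0 by rewrite mxE oppr_gt0.
  by right; rewrite blkvecN; apply: (S3_conf_le_below _ _ _ _ cneg'); rewrite Hcd' oppr0.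
exfalso; apply: Nx; rewrite -blkvec0.
have a0' i : a i 0 = 0 by apply/eqP/negbFE/a0.
have c0' i : c i 0 = 0 by apply/eqP/negbFE/c0.
by congr blkvec; apply/cV0P=> i; move: (Hab i) (Hcd i); rewrite a0' c0'; lia.
Qed.

Section Disjointness.

Variable k : nat.
Implicit Type x : 'cV[int]_(ncols k).

Lemma pm_S1_blkvec x :
  pm (@S1 k) x -> exists a b c d s t, x = blkvec a b c d s t /\ s <> 0.
Proof.
case=> [[v1 [v2 [_ _ ->]]] | [v1 [v2 [_ _ Ex]]]]; first by do 6 eexists.
by rewrite -[x]opprK Ex blkvecN; do 6 eexists; split; first reflexivity.
Qed.

Lemma pm_S2_blkvec x : pm (@S2 k) x -> exists a b, x = blkvec a b 0 0 0 0 /\ a <> 0.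
Proof.
have evec_neq0 (i : 'I_k) : evec i <> 0.
  by move/matrixP/(_ i 0); rewrite !mxE !eqxx.
case=> [[i ->] | [i Ex]]; first by do 2 eexists; split; last exact: evec_neq0.
rewrite -[x]opprK Ex blkvecN !oppr0; do 2 eexists; split; first by [].
by move/eqP; rewrite oppr_eq0 => /eqP /evec_neq0.
Qed.

Lemma pm_S3_blkvec x : pm (@S3 k) x -> exists c d, x = blkvec 0 0 c d 0 0.
Proof.
case=> [[i ->] | [i Ex]]; first by do 2 eexists.
by rewrite -[x]opprK Ex blkvecN !oppr0; do 2 eexists.
Qed.

End Disjointness.

Theorem theorem2 (k : nat) (hk : (1 <= k)%N) :
  (forall x : 'cV[int]_(ncols k),
     graver (A_mat k) x <-> [\/ pm (@S1 k) x, pm (@S2 k) x | pm (@S3 k) x]) /\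
  (forall x : 'cV[int]_(ncols k),
     ~ (pm (@S1 k) x /\ pm (@S2 k) x) /\
     ~ (pm (@S1 k) x /\ pm (@S3 k) x) /\
     ~ (pm (@S2 k) x /\ pm (@S3 k) x)).
Proof.
split.
  apply: graver_testP => [x [] | x]; last exact: graver_candidate_conf_le_below.
  - exact/graver_pm/S1_graver.
  - exact/graver_pm/S2_graver.
  - exact/graver_pm/S3_graver.
move=> x; split; last split.
- case=> /pm_S1_blkvec [a [b [c [d [s [t [-> s0]]]]]]] /pm_S2_blkvec [? [? []]].
  by move=> /blkvec_inj [_ _ _ _ []].
- case=> /pm_S1_blkvec [a [b [c [d [s [t [-> s0]]]]]]] /pm_S3_blkvec [? [?]].
  by move=> /blkvec_inj [_ _ _ _ []].
- case=> /pm_S2_blkvec [a [b [-> a0]]] /pm_S3_blkvec [? [?]].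
  by move=> /blkvec_inj [].
Qed.
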